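(* Let $G$ be a finite Eulerian graph (every vertex has even degree) in which every edge is labelled $o$ or $s$, and let $g(G)$ be the number of balanced factorientations of $G$ with respect to these labels. Then $g(G)\leq \varepsilon(G)$, where $\varepsilon(G)$ is the number of Eulerian orientations of $G$.
   Context: A factorientation of a graph whose edges are labelled $o$ or $s$ consists of orienting every $o$-edge and deciding for every $s$-edge whether it is selected or not. The mixed degree of a vertex $v$ is the number of $o$-edges oriented towards $v$ plus the number of selected $s$-edges incident to $v$. A factorientation is balanced if every vertex $v$ has mixed degree $d_G(v)/2$. An Eulerian orientation is an orientation in which every vertex has in-degree equal to out-degree. *)

From mathcomp Require Import all_boot.
Set Implicit Arguments. Unset Strict Implicit. Unset Printing Implicit Defensive.

(* A finite loopless multigraph: vertex type V, edge type E, each edge e has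
   two distinct endpoints [src e] and [tgt e] (the order is only a reference
   orientation). *)
Section Graph.
Variables (V E : finType) (src tgt : E -> V).

Definition incident (e : E) (v : V) : bool := (src e == v) || (tgt e == v).

(* degree of v (no loops, so each incident edge counts once) *)
Definition deg (v : V) : nat := #|[set e : E | incident e v]|.

Definition eulerian_graph : Prop := forall v : V, ~~ odd (deg v).

Definition head (ori : {ffun E -> bool}) (e : E) : V := if ori e then tgt e else src e.
Definition tail (ori : {ffun E -> bool}) (e : E) : V := if ori e then src e else tgt e.

Definition indeg (ori : {ffun E -> bool}) (v : V) : nat := #|[set e : E | head ori e == v]|.
Definition outdeg (ori : {ffun E -> bool}) (v : V) : nat := #|[set e : E | tail ori e == v]|.

Definition eulerian_orientation (ori : {ffun E -> bool}) : bool :=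
  [forall v : V, indeg ori v == outdeg ori v].

(* Labels: [lab e = true] means e is an o-edge, [false] means an s-edge.
   A factorientation is a function [f : {ffun E -> bool}]: on an o-edge it is
   the orientation (as above), on an s-edge it says whether e is selected. *)
Definition mixed_deg (lab : E -> bool) (f : {ffun E -> bool}) (v : V) : nat :=
  #|[set e : E | if lab e then head f e == v else f e && incident e v]|.

Definition balanced (lab : E -> bool) (f : {ffun E -> bool}) : bool :=
  [forall v : V, (mixed_deg lab f v).*2 == deg v].

Definition num_balanced_factorientations (lab : E -> bool) : nat :=
  #|[set f : {ffun E -> bool} | balanced lab f]|.

Definition num_eulerian_orientations : nat :=
  #|[set ori : {ffun E -> bool} | eulerian_orientation ori]|.

End Graph.

From Pilot Require Import Defs.
From mathcomp Require Import all_boot fingroup perm.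
Set Implicit Arguments. Unset Strict Implicit. Unset Printing Implicit Defensive.

(* Double counting over transition systems, i.e. fixed-point-free involutions of the darts
   (half-edges) that pair up the darts at each vertex.  Colour a dart by whether it
   contributes to the mixed degree of its vertex.  A factorientation is balanced exactly
   when its colouring alternates along some transition system, and then it alternates
   along the same number C > 0 of them, because any two balanced colourings are conjugate
   by a vertex-preserving permutation of the darts.  For a fixed transition system,
   alternation is an affine system over GF(2) in the edge values whose linear part does not
   depend on the labels, and the all-o system is solvable: the transition system splits G
   into closed trails, which can be oriented coherently.  So every transition system
   carries at least as many alternating Eulerian orientations as alternating balanced
   factorientations, and dividing by C gives g(G) <= eps(G). *)

Lemma eq_fibres_perm (T : finType) (K : eqType) (k k' : T -> K) :
    (forall x, #|[pred h | k h == x]| = #|[pred h | k' h == x]|) ->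
  exists p : {perm T}, forall h, k' (p h) = k h.
Proof.
move=> eq_fibres.
have /tuple_permP[p Ep] : perm_eq (codom k) (codom_tuple k').
  apply/allP => x _ /=; rewrite !count_map -!size_filter.
  by have := eq_fibres x; rewrite !cardE /enum_mem -enumT => ->.
have inj_p : injective (enum_val \o p \o enum_rank).
  exact: inj_comp (inj_comp enum_val_inj perm_inj) enum_rank_inj.
exists (perm inj_p) => h; rewrite permE /=.
have := congr1 (nth (k h) ^~ (enum_rank h)) Ep.
by rewrite nth_codom nth_mktuple enum_rankK => ->; rewrite (tnth_nth (k h)) nth_codom.
Qed.

Definition alternating (D : finType) (c : D -> bool) (T : D -> D) : bool :=
  [forall h, c (T h) != c h].

Lemma alternatingP (D : finType) (c : D -> bool) (T : D -> D) :
  reflect (forall h, c (T h) = ~~ c h) (alternating c T).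
Proof.
by apply: (iffP forallP) => altT h; move: (altT h); case: (c (T h)); case: (c h).
Qed.

Lemma eq_alternating (D : finType) (c1 c2 : D -> bool) (T : D -> D) :
  c1 =1 c2 -> alternating c1 T = alternating c2 T.
Proof. by move=> eq_c; apply: eq_forallb => h; rewrite !eq_c. Qed.

Lemma alternating_addb3 (D : finType) (c1 c2 c3 : D -> bool) (T : D -> D) :
    alternating c1 T -> alternating c2 T -> alternating c3 T ->
  alternating (fun h => c1 h (+) c2 h (+) c3 h) T.
Proof.
move=> /alternatingP alt1 /alternatingP alt2 /alternatingP alt3.
apply/alternatingP => h; rewrite alt1 alt2 alt3.
by case: (c1 h); case: (c2 h); case: (c3 h).
Qed.

Lemma card_alternating_shift (D E : finType) (edge : D -> E) (T : D -> D)
    (a b : D -> bool) (s : {ffun E -> bool}) :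
    alternating (fun h => s (edge h) (+) b h) T ->
  #|[set f : {ffun E -> bool} | alternating (fun h => f (edge h) (+) a h) T]| <=
  #|[set f : {ffun E -> bool} | alternating (fun h => f (edge h) (+) b h) T]|.
Proof.
move=> alt_s.
set sol_a := [set f : {ffun E -> bool} | alternating (fun h => f (edge h) (+) a h) T].
have [->|[r]] := set_0Vmem sol_a; first by rewrite cards0.
rewrite inE => alt_r.
pose shift (f : {ffun E -> bool}) := [ffun e => f e (+) r e (+) s e].
have inj_shift : injective shift.
  by move=> f g /ffunP eq_fg; apply/ffunP => e; move: (eq_fg e); rewrite !ffunE => /addIb/addIb.
rewrite -(card_imset _ inj_shift); apply: subset_leq_card.
apply/subsetP => _ /imsetP[f + ->]; rewrite !inE => alt_f.
have := alternating_addb3 alt_f alt_r alt_s.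
rewrite (eq_alternating (c2 := fun h => shift f (edge h) (+) b h)) // => h; rewrite ffunE.
by case: (f (edge h)) (r (edge h)) (s (edge h)) (a h) (b h) => [] [] [] [] [].
Qed.

Lemma exists_alternating_colouring (D : finType) (T R : D -> D) :
    involutive T -> involutive R -> (forall h, T h != h) -> (forall h, R h != h) ->
  exists col : D -> bool, alternating col T /\ alternating col R.
Proof.
move=> invT invR freeT freeR.
pose psi := R \o T.
have inj_psi : injective psi := inj_comp (inv_inj invR) (inv_inj invT).
have inj_iter i : injective (iter i psi).
  by elim: i => [|i IH] x y //= /inj_psi/IH.
have iter_psiT i x : iter i psi (T (iter i psi x)) = T x.
  elim: i => // i IH.
  by rewrite [iter i.+1 psi x]iterS iterSr /psi /= invT invR IH.
(* If x reaches T x in m psi-steps, the midpoint y := psi^(m/2) x satisfies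
   R (T y) = T y for odd m and T y = y for even m. *)
have not_conn x : ~~ fconnect psi x (T x).
  apply/negP => /iter_findex; set m := findex _ _ _.
  rewrite -(odd_double_half m) -addnn -(iter_psiT m./2 x).
  set y := iter m./2 psi x; case: (odd m) => /=; rewrite add0n iterD.
    by rewrite -iterS iterSr => /inj_iter; apply/eqP; exact: freeR.
  by move=> /inj_iter /esym; apply/eqP; exact: freeT.
have sym_psi : connect_sym (frel psi) := fconnect_sym inj_psi.
(* The psi-orbits of x and T x differ; col x says whether the orbit of x comes first. *)
pose rk x : nat := enum_rank (froot psi x).
have rk_neqT x : rk x != rk (T x).
  by rewrite /rk (inj_eq val_inj) (inj_eq enum_rank_inj) (root_connect sym_psi).
have rkR x : rk (R x) = rk (T x).
  have -> : R x = psi (T x) by rewrite /psi /= invT.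
  by rewrite /rk -(rootP sym_psi (fconnect1 psi (T x))).
have rkTR x : rk (T (R x)) = rk x.
  have {2}-> : x = psi (T (R x)) by rewrite /psi /= invT invR.
  by rewrite /rk -(rootP sym_psi (fconnect1 psi _)).
pose col x := rk x < rk (T x).
have colT x : rk (T x) < rk x = ~~ col x.
  by rewrite ltn_neqAle eq_sym rk_neqT leqNgt.
exists col; split; apply/alternatingP => x; rewrite /col ?invT ?rkR ?rkTR colT //.
Qed.

Section TransitionSystems.
Variables (V D : finType) (vert : D -> V).

Definition coloured_at (c : D -> bool) (v : V) : {set D} := [set h | (vert h == v) && c h].

Definition half_coloured (c : D -> bool) : bool :=
  [forall v, #|coloured_at c v|.*2 == #|[set h | vert h == v]|].

Definition transition_system (T : {ffun D -> D}) : bool :=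
  [forall h, [&& T h != h, T (T h) == h & vert (T h) == vert h]].

Definition n_alternating (c : D -> bool) : nat :=
  #|[set T | transition_system T && alternating c T]|.

Lemma transition_systemP (T : {ffun D -> D}) :
  reflect [/\ forall h, T h != h, involutive T & forall h, vert (T h) = vert h]
          (transition_system T).
Proof.
apply: (iffP forallP) => [tT | [freeT invT vertT] h]; last by rewrite freeT invT vertT !eqxx.
by split=> h; have /and3P[? /eqP ? /eqP ?] := tT h.
Qed.

Lemma half_colouredP (c : D -> bool) :
  reflect (forall v, #|coloured_at (predC c) v| = #|coloured_at c v|) (half_coloured c).
Proof.
have split_darts v : #|[set h | vert h == v]| = #|coloured_at c v| + #|coloured_at (predC c) v|.
  by rewrite -(cardsID [set h | c h]); congr (_ + _); apply: eq_card => h; rewrite !inE // andbC.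
apply: (iffP forallP) => [hc v | hc v].
  by have := hc v; rewrite split_darts -addnn eqn_add2l => /eqP.
by rewrite split_darts hc addnn.
Qed.

Lemma half_coloured_predC (c : D -> bool) : half_coloured c -> half_coloured (predC c).
Proof.
move=> /half_colouredP hc; apply/half_colouredP => v; rewrite hc.
by apply: eq_card => h; rewrite !inE negbK.
Qed.

Lemma half_coloured_fibres (c c' : D -> bool) :
    half_coloured c -> half_coloured c' ->
  forall x, #|[pred h | (vert h, c h) == x]| = #|[pred h | (vert h, c' h) == x]|.
Proof.
move=> hc hc' [v b].
have fibreE (c0 : D -> bool) : #|[pred h | (vert h, c0 h) == (v, b)]| =
    #|coloured_at (if b then c0 else predC c0) v|.
  by apply: eq_card => h; rewrite !inE xpair_eqE; case: b; rewrite ?eqb_id ?eqbF_neg.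
have eq_coloured : #|coloured_at c v| = #|coloured_at c' v|.
  by apply: double_inj; rewrite (eqP (forallP hc v)) (eqP (forallP hc' v)).
by rewrite !fibreE {fibreE}; case: b; rewrite ?(half_colouredP _ hc) ?(half_colouredP _ hc').
Qed.

Lemma alternating_half_coloured (c : D -> bool) (T : {ffun D -> D}) :
  transition_system T -> alternating c T -> half_coloured c.
Proof.
move=> /transition_systemP[_ invT vertT] /alternatingP altT.
apply/half_colouredP => v; rewrite -(card_preimset _ (inv_inj invT)).
by apply: eq_card => h; rewrite !inE vertT altT negbK.
Qed.

Lemma n_alternating_gt0 (c : D -> bool) : half_coloured c -> 0 < n_alternating c.
Proof.
move=> hc; have [p vc_p] := eq_fibres_perm (half_coloured_fibres hc (half_coloured_predC hc)).
have vert_p h : vert (p h) = vert h by case: (vc_p h).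
have c_p h : c (p h) = ~~ c h by case: (vc_p h) => _ <-; rewrite negbK.
have c_pV h : c ((p^-1)%g h) = ~~ c h by rewrite -{2}(permKV p h) c_p negbK.
pose T := [ffun h => if c h then p h else (p^-1)%g h].
have c_T h : c (T h) = ~~ c h by rewrite ffunE; case: ifP => ch; rewrite ?c_p ?c_pV ch.
apply/card_gt0P; exists T; rewrite inE; apply/andP; split; last exact/alternatingP.
apply/transition_systemP; split.
- by move=> h; apply/eqP => eq_Th; move: (c_T h); rewrite eq_Th; case: (c h).
- move=> h; rewrite !ffunE; case: (c h) (c_p h) (c_pV h) => /= cp cpV.
    by rewrite cp /= permK.
  by rewrite cpV /= permKV.
- by move=> h; rewrite ffunE; case: (c h); rewrite ?vert_p // -{2}(permKV p h) vert_p.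
Qed.

Lemma n_alternating_le (c c' : D -> bool) :
  half_coloured c -> half_coloured c' -> n_alternating c <= n_alternating c'.
Proof.
move=> hc hc'; have [p vc_p] := eq_fibres_perm (half_coloured_fibres hc hc').
have vert_p h : vert (p h) = vert h by case: (vc_p h).
have c_p h : c' (p h) = c h by case: (vc_p h).
pose conj (T : {ffun D -> D}) := [ffun h => p (T ((p^-1)%g h))].
have inj_conj : injective conj.
  move=> T1 T2 /ffunP eqT; apply/ffunP => h.
  by have := eqT (p h); rewrite !ffunE permK => /perm_inj.
rewrite /n_alternating -(card_imset _ inj_conj); apply: subset_leq_card.
apply/subsetP => _ /imsetP[T + ->]; rewrite !inE.
move=> /andP[/transition_systemP[freeT invT vertT] /alternatingP altT].
apply/andP; split; last by apply/alternatingP => h; rewrite ffunE c_p altT -{2}(permKV p h) c_p.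
apply/transition_systemP; split=> h; rewrite !ffunE ?permK ?invT ?permKV //.
  by rewrite -{2}(permKV p h) (inj_eq perm_inj) freeT.
by rewrite vert_p vertT -{2}(permKV p h) vert_p.
Qed.

Lemma n_alternating_eq (c c' : D -> bool) :
  half_coloured c -> half_coloured c' -> n_alternating c = n_alternating c'.
Proof. by move=> hc hc'; apply/eqP; rewrite eqn_leq !n_alternating_le. Qed.

Lemma n_alternating_eq0 (c : D -> bool) : ~~ half_coloured c -> n_alternating c = 0.
Proof.
move=> not_hc; apply/eqP; rewrite cards_eq0; apply/eqP/setP => T; rewrite !inE.
by apply: contraNF not_hc => /andP[tT altT]; exact: alternating_half_coloured tT altT.
Qed.

Lemma card_half_coloured_mul (F : finType) (chi : F -> D -> bool) (c0 : D -> bool) :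
    half_coloured c0 ->
  #|[set f | half_coloured (chi f)]| * n_alternating c0 =
  \sum_(T | transition_system T) #|[set f | alternating (chi f) T]|.
Proof.
move=> hc0; rewrite -sum1_card big_distrl /=.
transitivity (\sum_f n_alternating (chi f)).
  rewrite [RHS](bigID (fun f => half_coloured (chi f))) /=.
  rewrite [X in _ = _ + X]big1 ?addn0 => [|f /n_alternating_eq0 //].
  by apply: eq_big => [f|f]; rewrite ?inE // => hf; rewrite mul1n (n_alternating_eq hc0 hf).
rewrite /n_alternating; under eq_bigr do rewrite -sum1dep_card.
rewrite (exchange_big_dep transition_system) /= => [|f T _ /andP[] //].
by apply: eq_bigr => T tT; rewrite sum1dep_card; apply: eq_card => f; rewrite !inE tT.
Qed.

End TransitionSystems.

Section Darts.
Variables (V E : finType) (src tgt : E -> V).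
Hypothesis loopless : forall e, src e != tgt e.

Definition dart_vertex (h : E * bool) : V := if h.2 then tgt h.1 else src h.1.

(* The darts of e that contribute to the mixed degree: the dart at the head of an o-edge,
   and both darts of a selected s-edge. *)
Definition counted (lab : E -> bool) (f : {ffun E -> bool}) (h : E * bool) : bool :=
  f h.1 (+) (lab h.1 && ~~ h.2).

Lemma src_tgt_eqF e v : (src e == v) && (tgt e == v) = false.
Proof. by apply: contraNF (loopless e) => /andP[/eqP-> /eqP->]. Qed.

Lemma dart_vertexE e b v :
  (dart_vertex (e, b) == v) = incident src tgt e v && (b == (tgt e == v)).
Proof.
rewrite /dart_vertex /incident /=; have := loopless e.
by case: b; case: (eqVneq (tgt e) v) => [->|]; rewrite ?orbT ?orbF ?andbT ?andbF // => /negbTE.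
Qed.

Lemma card_coloured_at_darts (c : E * bool -> bool) v :
  #|coloured_at dart_vertex c v| = #|[set e | incident src tgt e v && c (e, tgt e == v)]|.
Proof.
have inj_dart : injective (fun e => (e, tgt e == v)) by move=> e1 e2 [].
rewrite -(card_imset _ inj_dart); apply: eq_card => -[e b]; rewrite inE dart_vertexE.
apply/idP/imsetP => [/andP[/andP[ie /eqP->] ce] | [e' + [-> ->]]].
  by exists e; rewrite // inE ie.
by rewrite inE => /andP[-> ->]; rewrite eqxx.
Qed.

Lemma mixed_deg_counted lab f v :
  mixed_deg src tgt lab f v = #|coloured_at dart_vertex (counted lab f) v|.
Proof.
rewrite card_coloured_at_darts; apply: eq_card => e; rewrite !inE /counted /Defs.head /incident /=.
have := src_tgt_eqF e v.
by case: (lab e) (f e) => [] [] /=; case: (src e == v); case: (tgt e == v).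
Qed.

Lemma deg_darts v : deg src tgt v = #|[set h | dart_vertex h == v]|.
Proof.
transitivity #|coloured_at dart_vertex xpredT v|.
  by rewrite card_coloured_at_darts; apply: eq_card => e; rewrite !inE andbT.
by apply: eq_card => h; rewrite !inE andbT.
Qed.

Lemma balanced_half_coloured lab f :
  balanced src tgt lab f = half_coloured dart_vertex (counted lab f).
Proof. by apply: eq_forallb => v; rewrite mixed_deg_counted deg_darts. Qed.

Lemma eulerian_orientation_balanced ori :
  eulerian_orientation src tgt ori = balanced src tgt xpredT ori.
Proof.
have indegE v : indeg src tgt ori v = #|coloured_at dart_vertex (counted xpredT ori) v|.
  by rewrite -mixed_deg_counted; apply: eq_card => e; rewrite !inE.
have outdegE v : outdeg src tgt ori v = #|coloured_at dart_vertex (predC (counted xpredT ori)) v|.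
  rewrite card_coloured_at_darts; apply: eq_card => e; rewrite !inE /counted /tail /incident /=.
  have := src_tgt_eqF e v.
  by case: (ori e); case: (src e == v); case: (tgt e == v).
rewrite balanced_half_coloured; apply/forallP/half_colouredP => [eq_deg v | eq_deg v].
  by have := eq_deg v; rewrite indegE outdegE => /eqP.
by rewrite indegE outdegE eq_deg.
Qed.

Lemma exists_alternating_orientation (T : E * bool -> E * bool) :
  involutive T -> (forall h, T h != h) -> exists s, alternating (counted xpredT s) T.
Proof.
move=> invT freeT; pose other_end (h : E * bool) := (h.1, ~~ h.2).
have invR : involutive other_end by move=> [e b]; rewrite /other_end negbK.
have freeR h : other_end h != h by case: h => e b; rewrite /other_end xpair_eqE /= eqxx; case: b.
have [col [altT /alternatingP altR]] := exists_alternating_colouring invT invR freeT freeR.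
exists [ffun e => col (e, true)]; rewrite (eq_alternating (c2 := col)) // => -[e b].
rewrite /counted ffunE /=; case: b => /=; first by rewrite addbF.
by have /= -> := altR (e, false); rewrite addbT negbK.
Qed.

Lemma card_balanced_le lab :
  #|[set f | balanced src tgt lab f]| <= #|[set f | balanced src tgt xpredT f]|.
Proof.
have [->|[f0]] := set_0Vmem [set f | balanced src tgt lab f]; first by rewrite cards0.
rewrite inE balanced_half_coloured => hc0.
have balancedE l :
    [set f | balanced src tgt l f] = [set f | half_coloured dart_vertex (counted l f)].
  by apply/setP => f; rewrite !inE balanced_half_coloured.
rewrite -(leq_pmul2r (n_alternating_gt0 hc0)) !balancedE !(card_half_coloured_mul _ hc0).
apply: leq_sum => T /transition_systemP[freeT invT _].
have [s alt_s] := exists_alternating_orientation invT freeT.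
exact: card_alternating_shift alt_s.
Qed.

End Darts.

Theorem theorem1p10 (V E : finType) (src tgt : E -> V) (lab : E -> bool)
  (loopless : forall e : E, src e != tgt e)
  (Heul : eulerian_graph src tgt) :
  num_balanced_factorientations src tgt lab <= num_eulerian_orientations src tgt.
Proof.
rewrite /num_eulerian_orientations.
under eq_finset do rewrite (eulerian_orientation_balanced loopless).
exact: card_balanced_le.
Qed.
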